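(* For any $k\geq1$, the maps $\Delta_\prec,\Delta_\succ$ endow $\mathbf{PM}_k^+$ with a codendriform coalgebra structure: for every $x\in\mathbf{PM}_k^+$, $\Delta(x)=\mathbf{F}_\emptyset\otimes x+\Delta_\prec(x)+\Delta_\succ(x)+x\otimes\mathbf{F}_\emptyset$, and, with $\bar\Delta=\Delta_\prec+\Delta_\succ$ and $I$ the identity, $(\Delta_\prec\otimes I)\circ\Delta_\prec=(I\otimes\bar\Delta)\circ\Delta_\prec$, $(\Delta_\succ\otimes I)\circ\Delta_\prec=(I\otimes\Delta_\prec)\circ\Delta_\succ$, $(\bar\Delta\otimes I)\circ\Delta_\succ=(I\otimes\Delta_\succ)\circ\Delta_\succ$ on $\mathbf{PM}_k^+$.
   Context: $A_k=\{0,\dots,k\}$. A $k$-packed matrix of size $n$ is an $n\times n$ matrix over $A_k$ with a nonzero entry in each row and column ($\emptyset$ of size 0). $\operatorname{cp}(N)$ deletes the null rows and null columns of $N$. A column decomposition $M=L\bullet R$ of a $k$-packed $M$ of size $n$ is a writing $M=[L\mid R]$ with $L$ the first $j$ columns and $R$ the last $n-j$ columns ($0\le j\le n$) such that $\operatorname{cp}(L),\operatorname{cp}(R)$ are square. $\mathbf{PM}_k$ is the vector space with basis $(\mathbf{F}_M)$ and coproduct $\Delta(\mathbf{F}_M)=\sum_{M=L\bullet R}\mathbf{F}_{\operatorname{cp}(L)}\otimes\mathbf{F}_{\operatorname{cp}(R)}$; $\mathbf{PM}_k^+$ is the span of $\mathbf{F}_M$, $M\neq\emptyset$. For nonempty $M$,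 $\Delta_\prec(\mathbf{F}_M)$ (resp. $\Delta_\succ(\mathbf{F}_M)$) is the sum of $\mathbf{F}_{\operatorname{cp}(L)}\otimes\mathbf{F}_{\operatorname{cp}(R)}$ over column decompositions $M=L\bullet R$ in which $L$ and $R$ each have at least one column and the nonzero entries of the last row of $M$ lie in $L$ (resp. in $R$); extended linearly. *)

From mathcomp Require Import all_boot all_algebra.
Set Implicit Arguments. Unset Strict Implicit. Unset Printing Implicit Defensive.
Import GRing.Theory.
Local Open Scope ring_scope.

(** Matrices over A_k = {0..k} are encoded as lists of rows of naturals. *)
Definition mat := seq (seq nat).

(** The empty matrix [::] is the packed matrix of size 0. *)
Definition is_packed (k : nat) (M : mat) : bool :=
  [&& all (fun r => size r == size M) M,
      all (all (fun a => (a <= k)%N)) M,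
      all (has (fun a => a != 0%N)) M &
      all (fun c => has (fun r => nth 0%N r c != 0%N) M) (iota 0 (size M))].

Definition cp (w : nat) (N : mat) : mat :=
  let cols := [seq c <- iota 0 w | has (fun r => nth 0%N r c != 0%N) N] in
  [seq [seq nth 0%N r c | c <- cols] | r <- N & has (fun a => a != 0%N) r].

Definition is_square (N : mat) : bool := all (fun r => size r == size N) N.

Definition leftM (j : nat) (M : mat) : mat := map (take j) M.
Definition rightM (j : nat) (M : mat) : mat := map (drop j) M.

Definition col_dec (M : mat) (j : nat) : bool :=
  [&& (j <= size M)%N, is_square (cp j (leftM j M))
    & is_square (cp (size M - j) (rightM j M))].

Definition lastrow (M : mat) : seq nat := last [::] M.

Section FormalSums.
Variable K : ringType.

(** Elements of the free K-module on a type T are represented by formal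
    linear combinations (lists of (coefficient, basis element)); two of them
    are equal as vectors iff all their coefficients agree ([feq]). *)
Definition coef (T : eqType) (x : seq (K * T)) (t : T) : K :=
  \sum_(p <- x | p.2 == t) p.1.

Definition feq (T : eqType) (x y : seq (K * T)) : Prop :=
  forall t, coef x t = coef y t.

(** linear extension of a map defined on basis elements *)
Definition ext (T U : Type) (f : T -> seq (K * U)) (x : seq (K * T))
  : seq (K * U) :=
  flatten [seq [seq (p.1 * q.1, q.2) | q <- f p.2] | p <- x].

(** tensor product of two basis-level maps, on a basis element a (x) b *)
Definition tens (A B C D : Type) (f : A -> seq (K * C)) (g : B -> seq (K * D))
  (ab : A * B) : seq (K * (C * D)) :=
  [seq (p.1 * q.1, (p.2, q.2)) | p <- f ab.1, q <- g ab.2].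

Definition idb (T : Type) (t : T) : seq (K * T) := [:: (1, t)].

Definition reassoc (A B C : Type) (x : seq (K * (A * (B * C))))
  : seq (K * (A * B * C)) :=
  [seq (p.1, (p.2.1, p.2.2.1, p.2.2.2)) | p <- x].

(** F_empty (x) x  and  x (x) F_empty *)
Definition emptyL (x : seq (K * mat)) : seq (K * (mat * mat)) :=
  [seq (p.1, ([::] : mat, p.2)) | p <- x].
Definition emptyR (x : seq (K * mat)) : seq (K * (mat * mat)) :=
  [seq (p.1, (p.2, [::] : mat)) | p <- x].

Definition Delta (M : mat) : seq (K * (mat * mat)) :=
  [seq (1, (cp j (leftM j M), cp (size M - j) (rightM j M)))
  | j <- iota 0 (size M).+1 & col_dec M j].

Definition Dprec (M : mat) : seq (K * (mat * mat)) :=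
  [seq (1, (cp j (leftM j M), cp (size M - j) (rightM j M)))
  | j <- iota 0 (size M).+1 &
     [&& col_dec M j, (0 < j)%N, (j < size M)%N &
         all (fun a => a == 0%N) (drop j (lastrow M))]].

Definition Dsucc (M : mat) : seq (K * (mat * mat)) :=
  [seq (1, (cp j (leftM j M), cp (size M - j) (rightM j M)))
  | j <- iota 0 (size M).+1 &
     [&& col_dec M j, (0 < j)%N, (j < size M)%N &
         all (fun a => a == 0%N) (take j (lastrow M))]].

Definition Dbar (M : mat) : seq (K * (mat * mat)) := Dprec M ++ Dsucc M.

End FormalSums.

Definition in_PMplus (K : ringType) (k : nat) (x : seq (K * mat)) : bool :=
  all (fun p => is_packed k p.2 && (p.2 != [::])) x.

From mathcomp Require Import all_boot all_algebra zify.
Set Implicit Arguments. Unset Strict Implicit. Unset Printing Implicit Defensive.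

(* A column j of a packed matrix M of size n gives a column decomposition iff
   exactly j rows of M meet the columns [0, j) and exactly n - j rows meet
   [j, n).  These two sets of rows are then complementary, so the last row of
   M lies entirely on one side: the inner terms of Delta are exactly those of
   Delta_prec and Delta_succ.  Iterating, both sides of each codendriform
   identity are sums over pairs of cuts 0 < i < j < n splitting M into three
   packed column blocks: by subadditivity of row counts and since all n rows
   are counted over [0, n), a cut of the left (right) factor of a cut of M is
   a cut of M, and conversely.  In each identity the conditions on the last
   row then single out the same one of the three blocks. *)

Definition nonnull (r : seq nat) : bool := has (fun a => a != 0) r.

Definition slice (a b : nat) (r : seq nat) : seq nat := take (b - a) (drop a r).

Lemma all_eq0_nonnull (r : seq nat) : all (fun a => a == 0) r = ~~ nonnull r.
Proof. by rewrite /nonnull -all_predC; apply: eq_all => a /=; rewrite negbK. Qed.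

Lemma slice_slice a b a' b' r : a' <= b' -> b' <= b - a ->
  slice a' b' (slice a b r) = slice (a + a') (a + b') r.
Proof.
move=> le_ab' le_b'; rewrite /slice.
have -> : b - a = (b - a - a') + a' by lia.
rewrite -take_drop take_takel; last lia.
by rewrite drop_drop addnC; congr (take _ _); lia.
Qed.

Lemma slice_cat a b c r : a <= b -> b <= c ->
  slice a c r = slice a b r ++ slice b c r.
Proof.
move=> le_ab le_bc; rewrite /slice.
have -> : c - a = (b - a) + (c - b) by lia.
by rewrite takeD drop_drop; congr (_ ++ take _ (drop _ _)); lia.
Qed.

Lemma nonnull_slice_cat a b c r : a <= b -> b <= c ->
  nonnull (slice a c r) = nonnull (slice a b r) || nonnull (slice b c r).
Proof. by move=> le_ab le_bc; rewrite (slice_cat r le_ab le_bc) /nonnull has_cat. Qed.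

Lemma nonnull_slice a b r : nonnull (slice a b r) -> nonnull r.
Proof. by move=> /hasP[x /mem_take /mem_drop x_r nz_x]; apply/hasP; exists x. Qed.

Lemma size_slice a b r : a <= b -> b <= size r -> size (slice a b r) = b - a.
Proof. by move=> le_ab le_b; rewrite size_take size_drop; case: ifP; lia. Qed.

Lemma nth_slice a b r c : c < b - a -> nth 0 (slice a b r) c = nth 0 r (a + c).
Proof. by move=> lt_c; rewrite nth_take // nth_drop. Qed.

Lemma slice0 b r : slice 0 b r = take b r.
Proof. by rewrite /slice subn0 drop0. Qed.

Lemma slice_drop a b r : size r <= b -> slice a b r = drop a r.
Proof. by move=> le_rb; rewrite /slice take_oversize // size_drop; lia. Qed.

(** The column block [a, b) of a matrix, after deleting its null rows; when
    the block has no null column this is [cp] of the block. *)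
Definition block (M : mat) (a b : nat) : mat :=
  filter nonnull (map (slice a b) M).

Definition nrows (M : mat) (a b : nat) : nat :=
  count (fun r => nonnull (slice a b r)) M.

Lemma size_block M a b : size (block M a b) = nrows M a b.
Proof. by rewrite size_filter count_map. Qed.

Lemma block_block M a b a' b' : a' <= b' -> b' <= b - a ->
  block (block M a b) a' b' = block M (a + a') (a + b').
Proof.
move=> le_ab' le_b'; rewrite /block; elim: M => //= r N IH.
rewrite -(slice_slice r le_ab' le_b').
case nz_r: (nonnull (slice a b r)); rewrite /= ?IH //.
by case nz_r': (nonnull _) => //; rewrite (nonnull_slice nz_r') in nz_r.
Qed.

Lemma nrows_block M a b a' b' : a' <= b' -> b' <= b - a ->
  nrows (block M a b) a' b' = nrows M (a + a') (a + b').
Proof. by move=> le_ab' le_b'; rewrite -!size_block block_block. Qed.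

Lemma block_nil M a : block M a a = [::].
Proof. by rewrite /block; elim: M => //= r N ->; rewrite /slice subnn take0. Qed.

Lemma nrows_subadd M a b c : a <= b -> b <= c ->
  nrows M a c <= nrows M a b + nrows M b c.
Proof.
move=> le_ab le_bc; rewrite /nrows -count_predUI.
rewrite (eq_count (a2 := predU (fun r => nonnull (slice a b r))
                               (fun r => nonnull (slice b c r)))) ?leq_addr //.
by move=> r; rewrite /= (nonnull_slice_cat r le_ab le_bc).
Qed.

Lemma lastrow_block M a b : nonnull (slice a b (lastrow M)) ->
  lastrow (block M a b) = slice a b (lastrow M).
Proof.
rewrite /lastrow; case/lastP: M => [|N r]; first by rewrite /slice.
by rewrite last_rcons => nz_r; rewrite /block map_rcons filter_rcons nz_r last_rcons.
Qed.

Definition packed (M : mat) : bool :=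
  [&& all (fun r => size r == size M) M, all nonnull M &
      all (fun c => has (fun r => nth 0 r c != 0) M) (iota 0 (size M))].

Lemma is_packed_packed k M : is_packed k M -> packed M.
Proof. by case/and4P=> sizeM _ rowsM colsM; apply/and3P. Qed.

(** Both sides of the block [a, b) cut at column j become square after [cp]. *)
Definition cut (M : mat) (a j b : nat) : bool :=
  (nrows M a j == j - a) && (nrows M j b == b - j).

Lemma cp_full w N : all (fun r => size r == w) N ->
  (forall c, c < w -> has (fun r => nth 0 r c != 0) N) -> cp w N = filter nonnull N.
Proof.
move=> sizeN colsN; rewrite /cp.
have -> : [seq c <- iota 0 w | has (fun r => nth 0 r c != 0) N] = iota 0 w.
  by apply/all_filterP/allP => c; rewrite mem_iota => /andP[_ ?]; apply: colsN; lia.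
rewrite -[RHS]map_id; apply/eq_in_map => r; rewrite mem_filter => /andP[_ r_N].
by move/allP: sizeN => /(_ r r_N) /eqP <-; rewrite -{3}(mkseq_nth 0 r).
Qed.

Definition cuts (M : mat) (a b : nat) (P : pred nat) : seq nat :=
  [seq j <- iota a (b - a).+1 | [&& a < j, j < b, cut M a j b & P j]].

Lemma mem_cuts M a b P j : (j \in cuts M a b P) = [&& a < j, j < b, cut M a j b & P j].
Proof.
rewrite mem_filter mem_iota andb_idr // => /and3P[lt_aj lt_jb _].
by apply/andP; split; lia.
Qed.

Lemma uniq_cuts M a b P : uniq (cuts M a b P).
Proof. exact/filter_uniq/iota_uniq. Qed.

Lemma cuts_filter M a b P : cuts M a b P = filter P (cuts M a b predT).
Proof.
rewrite -filter_predI; apply: eq_filter => j /=.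
by case: (P j); rewrite ?andbT ?andbF.
Qed.

Lemma eq_cuts M a b P Q : (forall j, a < j -> j < b -> P j = Q j) ->
  cuts M a b P = cuts M a b Q.
Proof.
move=> eqPQ; apply: eq_filter => j.
by case: (ltnP a j) => //= lt_aj; case: (ltnP j b) => //= lt_jb; rewrite eqPQ.
Qed.

Definition cut3 (M : mat) (i j : nat) : bool :=
  [&& nrows M 0 i == i, nrows M i j == j - i & nrows M j (size M) == size M - j].

Definition cut_pairs (M : mat) (a b : nat) (P : pred nat) : seq (mat * mat) :=
  [seq (block M a j, block M j b) | j <- cuts M a b P].

Section Packed.
Variable M : mat.
Hypothesis packedM : packed M.
Local Notation n := (size M).

Lemma size_row r : r \in M -> size r = n.
Proof. by case/and3P: packedM => /allP sizeM _ _ /sizeM /eqP. Qed.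

Lemma nonnull_row r : r \in M -> nonnull r.
Proof. by case/and3P: packedM => _ /allP rowsM _; apply: rowsM. Qed.

Lemma slice_row r : r \in M -> slice 0 n r = r.
Proof. by move=> r_M; rewrite slice0 take_oversize ?size_row. Qed.

Lemma nonnull_col c : c < n -> has (fun r => nth 0 r c != 0) M.
Proof. by case/and3P: packedM => _ _ /allP colsM ?; apply: colsM; rewrite mem_iota. Qed.

Lemma has_col_block a b c : a + c < n -> a <= b -> b <= n ->
  c < b - a -> has (fun r => nth 0 r c != 0) (map (slice a b) M).
Proof.
move=> lt_ac le_ab le_bn lt_c; have /hasP[r r_M nz_rc] := nonnull_col lt_ac.
by rewrite has_map; apply/hasP; exists r; rewrite //= nth_slice.
Qed.

Lemma cp_slice a b : a <= b -> b <= n -> cp (b - a) (map (slice a b) M) = block M a b.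
Proof.
move=> le_ab le_bn; apply: cp_full => [|c lt_c]; last by apply: has_col_block; lia.
by rewrite all_map; apply/allP => r r_M /=; rewrite size_slice ?size_row.
Qed.

Lemma cp_leftM j : j <= n -> cp j (leftM j M) = block M 0 j.
Proof.
move=> le_jn; rewrite -cp_slice // subn0.
by congr cp; apply: eq_map => r; rewrite slice0.
Qed.

Lemma cp_rightM j : j <= n -> cp (n - j) (rightM j M) = block M j n.
Proof.
move=> le_jn; rewrite -cp_slice //; congr cp; apply/eq_in_map => r r_M.
by rewrite slice_drop ?size_row.
Qed.

Lemma nrows_full : nrows M 0 n = n.
Proof.
rewrite /nrows (eq_in_count (a2 := predT)) ?count_predT // => r r_M.
by rewrite slice_row ?nonnull_row.
Qed.

Lemma block_full : block M 0 n = M.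
Proof.
rewrite /block; have -> : map (slice 0 n) M = M.
  by rewrite -[RHS]map_id; apply/eq_in_map => r; apply: slice_row.
apply/all_filterP/allP => r; apply: nonnull_row.
Qed.

Lemma nrows_gt0 a b : a < b -> b <= n -> 0 < nrows M a b.
Proof.
move=> lt_ab le_bn; rewrite -size_block /block size_filter -has_count has_map.
have /hasP[r r_M nz_ra] := @nonnull_col a ltac:(lia).
apply/hasP; exists r => //=; apply/hasP; exists (nth 0 (slice a b r) 0).
  by apply: mem_nth; rewrite size_slice ?size_row //; lia.
by rewrite nth_slice ?addn0 //; lia.
Qed.

Lemma is_square_block a b : a <= b -> b <= n ->
  is_square (block M a b) = (a == b) || (nrows M a b == b - a).
Proof.
move=> le_ab le_bn; rewrite /is_square size_block.
have [<-|ne_ab] := eqVneq a b; first by rewrite block_nil.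
have sizes : all (fun r => size r == b - a) (block M a b).
  apply/allP => r; rewrite mem_filter => /andP[_ /mapP[r0 r0_M ->]].
  by rewrite size_slice ?size_row.
have : 0 < size (block M a b) by rewrite size_block nrows_gt0 //; lia.
case: (block M a b) sizes => //= r N /andP[/eqP -> sizesN] _.
rewrite eq_sym; case: eqP => //= ->; exact: sizesN.
Qed.

Lemma col_decE j : j <= n -> col_dec M j = [|| j == 0, j == n | cut M 0 j n].
Proof.
move=> le_jn; rewrite /col_dec le_jn cp_leftM // cp_rightM //.
rewrite (@is_square_block 0 j) // (@is_square_block j n) // /cut subn0 eq_sym.
have [->|_] := eqVneq j 0; first by rewrite /= nrows_full subn0 eqxx orbT.
by have [->|] := eqVneq j n; rewrite ?nrows_full ?eqxx ?orbT.
Qed.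

Lemma packed_block a b : a <= b -> b <= n -> nrows M a b = b - a -> packed (block M a b).
Proof.
move=> le_ab le_bn nrows_ab; apply/and3P; split.
- rewrite size_block nrows_ab; apply/allP => r; rewrite mem_filter.
  by case/andP=> _ /mapP[r0 r0_M ->]; rewrite size_slice ?size_row.
- by apply/allP => r; rewrite mem_filter => /andP[].
- apply/allP => c; rewrite size_block nrows_ab mem_iota add0n => lt_c.
  have /hasP[r r_M nz_rc] := @has_col_block a b c ltac:(lia) le_ab le_bn lt_c.
  have size_r : size r = b - a by case/mapP: r_M => r0 r0_M ->; rewrite size_slice ?size_row.
  apply/hasP; exists r; rewrite // mem_filter r_M andbT.
  by apply/hasP; exists (nth 0 r c); rewrite ?mem_nth ?size_r.
Qed.

Lemma cut_cutl i j : i <= j -> j <= n -> cut M 0 j n && cut M 0 i j = cut3 M i j.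
Proof.
move=> le_ij le_jn; rewrite /cut /cut3 !subn0.
have := nrows_full; have := nrows_subadd M (leq0n i) le_ij.
have := nrows_subadd M (leq0n j) le_jn; lia.
Qed.

Lemma cut_cutr i j : i <= j -> j <= n -> cut M 0 i n && cut M i j n = cut3 M i j.
Proof.
move=> le_ij le_jn; rewrite /cut /cut3 !subn0.
have := nrows_full; have := nrows_subadd M le_ij le_jn.
have := nrows_subadd M (leq0n i) (leq_trans le_ij le_jn); lia.
Qed.

Lemma nonnull_cut j r : j <= n -> cut M 0 j n -> r \in M ->
  nonnull (slice j n r) = ~~ nonnull (slice 0 j r).
Proof.
move=> le_jn /andP[/eqP nrows_0j /eqP nrows_jn] r_M.
have split_r := nonnull_slice_cat r (leq0n j) le_jn.
have nz_r : nonnull (slice 0 n r) by rewrite slice_row ?nonnull_row.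
have cover : count (predU (fun r => nonnull (slice 0 j r)) (fun r => nonnull (slice j n r))) M = n.
  rewrite -[RHS]nrows_full; apply: eq_in_count => r' r'_M /=.
  by rewrite -nonnull_slice_cat.
have : ~~ has (predI (fun r => nonnull (slice 0 j r)) (fun r => nonnull (slice j n r))) M.
  have := count_predUI (fun r => nonnull (slice 0 j r)) (fun r => nonnull (slice j n r)) M.
  by rewrite -/(nrows M 0 j) -/(nrows M j n) nrows_0j nrows_jn cover has_count; lia.
move=> /hasPn /(_ r r_M) /=.
by move: nz_r; rewrite split_r; case: (nonnull (slice 0 j r)); case: (nonnull _).
Qed.

Lemma lastrow_in : 0 < n -> lastrow M \in M.
Proof. by rewrite /lastrow; case: (M) => //= r N _; apply: mem_last. Qed.

Lemma size_lastrow : size (lastrow M) <= n.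
Proof.
have [n0|/lastrow_in/size_row -> //] := posnP n.
by move: n0; rewrite /lastrow; case: (M).
Qed.

Lemma nonnull_lastrow : 0 < n -> nonnull (slice 0 n (lastrow M)).
Proof. by move/lastrow_in => ell_M; rewrite slice_row ?nonnull_row. Qed.

Lemma nonnull_lastrow_cut j : 0 < j -> j < n -> cut M 0 j n ->
  nonnull (slice j n (lastrow M)) = ~~ nonnull (slice 0 j (lastrow M)).
Proof.
move=> lt0j lt_jn cut_j; apply: nonnull_cut => //; first exact: ltnW.
by apply: lastrow_in; apply: leq_ltn_trans lt_jn.
Qed.

End Packed.

Section FormalSums.
Variable K : nzRingType.
Import GRing.Theory.
Local Open Scope ring_scope.

Definition basis_sum (T : Type) (s : seq T) : seq (K * T) := [seq (1, t) | t <- s].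

Lemma feq_perm (T : eqType) (x y : seq (K * T)) : perm_eq x y -> feq x y.
Proof. by move=> pxy t; rewrite /coef (perm_big _ pxy). Qed.

Lemma ext_cat (T U : Type) (F : T -> seq (K * U)) x y : ext F (x ++ y) = ext F x ++ ext F y.
Proof. by rewrite /ext map_cat flatten_cat. Qed.

Lemma ext_ext (T U V : Type) (F : U -> seq (K * V)) (G : T -> seq (K * U)) x :
  ext F (ext G x) = ext (fun t => ext F (G t)) x.
Proof.
elim: x => // [[c t] x] IH; rewrite [ext G _]/ext /= -/(ext G x) ext_cat IH.
congr (_ ++ _); rewrite /ext /= -map_comp map_flatten -map_comp.
congr flatten; apply: eq_map => -[d u] /=; rewrite -map_comp.
by apply: eq_map => q /=; rewrite mulrA.
Qed.

Lemma reassoc_ext (T A B C : Type) (F : T -> seq (K * (A * (B * C)))) x :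
  reassoc (ext F x) = ext (fun t => reassoc (F t)) x.
Proof.
rewrite /reassoc /ext map_flatten -!map_comp; congr flatten.
by apply: eq_map => p /=; rewrite -!map_comp.
Qed.

Lemma perm_ext (T U : eqType) (F G : T -> seq (K * U)) x :
  (forall p, p \in x -> perm_eq (F p.2) (G p.2)) -> perm_eq (ext F x) (ext G x).
Proof.
elim: x => // p x IH FG; rewrite -cat1s !ext_cat perm_cat ?IH //.
  by rewrite /ext /= !cats0 perm_map // FG ?mem_head.
by move=> q x_q; rewrite FG // inE x_q orbT.
Qed.

Lemma perm_ext_cat (T U : eqType) (F G : T -> seq (K * U)) x :
  perm_eq (ext (fun t => F t ++ G t) x) (ext F x ++ ext G x).
Proof.
apply/permP => c; elim: x => // p x IH.
by rewrite -cat1s !ext_cat !count_cat IH count_cat /ext /= map_cat count_cat; lia.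
Qed.

Lemma ext_unit (T U : Type) (f : T -> U) (x : seq (K * T)) :
  ext (fun t => [:: (1, f t)]) x = [seq (p.1, f p.2) | p <- x].
Proof. by elim: x => // p x IH; rewrite -cat1s ext_cat IH /ext /= mulr1. Qed.

Lemma ext_basis_sum (T U : Type) (F : T -> seq (K * U)) s :
  ext F (basis_sum s) = flatten (map F s).
Proof.
rewrite /ext /basis_sum -map_comp; congr flatten; apply: eq_map => t /=.
by rewrite -[RHS]map_id; apply: eq_map => -[c u] /=; rewrite mul1r.
Qed.

Lemma ext_tens_idbr (I A B C : Type) (F : A -> seq (K * C)) (a : I -> A) (b : I -> B) s :
  ext (tens F (@idb K B)) (basis_sum [seq (a j, b j) | j <- s]) =
  [seq (p.1, (p.2, b j)) | j <- s, p <- F (a j)].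
Proof.
rewrite ext_basis_sum -map_comp; congr flatten; apply: eq_map => j /=.
by rewrite /tens /=; elim: (F (a j)) => //= p s' ->; rewrite mulr1.
Qed.

Lemma reassoc_ext_tens_idbl (I A B D E : Type) (G : B -> seq (K * (D * E)))
    (a : I -> A) (b : I -> B) s :
  reassoc (ext (tens (@idb K A) G) (basis_sum [seq (a j, b j) | j <- s])) =
  [seq (q.1, (a j, q.2.1, q.2.2)) | j <- s, q <- G (b j)].
Proof.
rewrite ext_basis_sum -map_comp /reassoc map_flatten -map_comp.
congr flatten; apply: eq_map => j /=; rewrite /tens /= cats0 -map_comp.
by apply: eq_map => q /=; rewrite mul1r.
Qed.

End FormalSums.

Section PackedCoproducts.
Variables (K : nzRingType) (N : mat).
Hypothesis packedN : packed N.
Local Notation n := (size N).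
Local Notation ell := (lastrow N).

Lemma basis_sum_cp (C : pred nat) :
  [seq ((1%R : K), (cp j (leftM j N), cp (n - j) (rightM j N))) | j <- iota 0 n.+1 & C j] =
  basis_sum K [seq (block N 0 j, block N j n) | j <- iota 0 n.+1 & C j].
Proof.
rewrite /basis_sum -map_comp; apply/eq_in_map => j; rewrite mem_filter mem_iota /=.
by case/andP=> _ lt_jn; rewrite cp_leftM ?cp_rightM.
Qed.

Lemma filter_cuts (C P : pred nat) :
  {in iota 0 n.+1, C =1 [pred j | [&& 0 < j, j < n, cut N 0 j n & P j]]} ->
  [seq j <- iota 0 n.+1 | C j] = cuts N 0 n P.
Proof. by move=> eqC; rewrite /cuts subn0; apply: eq_in_filter. Qed.

Lemma Dprec_cuts :
  Dprec K N = basis_sum K (cut_pairs N 0 n (fun j => ~~ nonnull (slice j n ell))).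
Proof.
rewrite /Dprec basis_sum_cp (filter_cuts (P := fun j => ~~ nonnull (slice j n ell))) // => j _ /=.
case: (ltnP 0 j) => //= lt0j; case: (ltnP j n) => //= lt_jn; rewrite ?andbF //.
rewrite col_decE ?(ltnW lt_jn) // gtn_eqF // ltn_eqF //.
by rewrite all_eq0_nonnull slice_drop ?size_lastrow.
Qed.

Lemma Dsucc_cuts :
  Dsucc K N = basis_sum K (cut_pairs N 0 n (fun j => ~~ nonnull (slice 0 j ell))).
Proof.
rewrite /Dsucc basis_sum_cp (filter_cuts (P := fun j => ~~ nonnull (slice 0 j ell))) // => j _ /=.
case: (ltnP 0 j) => //= lt0j; case: (ltnP j n) => //= lt_jn; rewrite ?andbF //.
by rewrite col_decE ?(ltnW lt_jn) // gtn_eqF // ltn_eqF // all_eq0_nonnull slice0.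
Qed.

Lemma Dbar_cuts : perm_eq (Dbar K N) (basis_sum K (cut_pairs N 0 n predT)).
Proof.
rewrite /Dbar Dprec_cuts Dsucc_cuts /basis_sum /cut_pairs -!map_cat.
apply/perm_map/perm_map; rewrite [X in _ ++ X]cuts_filter [X in X ++ _]cuts_filter.
apply: perm_trans (permEl (perm_filterC (fun j => ~~ nonnull (slice j n ell)) _)).
rewrite perm_cat2l; apply/permP => c; congr count.
apply: eq_in_filter => j; rewrite mem_cuts => /and4P[lt0j lt_jn cut_j _].
change (~~ nonnull (slice 0 j ell) = ~~ ~~ nonnull (slice j n ell)).
by rewrite nonnull_lastrow_cut ?negbK.
Qed.

Lemma Delta_cuts : 0 < n ->
  Delta K N = ((1%R : K), ([::], N)) ::
    basis_sum K (cut_pairs N 0 n predT) ++ [:: ((1%R : K), (N, [::]))].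
Proof.
move=> n_gt0; rewrite /Delta basis_sum_cp /cut_pairs /cuts subn0.
have -> : iota 0 n.+1 = 0 :: iota 1 n.-1 ++ [:: n].
  by rewrite (_ : n.+1 = 1 + n.-1 + 1) ?iotaD ?add1n ?prednK //; lia.
have col0 : col_dec N 0 by rewrite col_decE.
have coln : col_dec N n by rewrite col_decE // eqxx orbT.
rewrite /= col0 !filter_cat /= coln ltnn andbF cats0.
rewrite /basis_sum !map_cat /= !block_nil block_full //.
congr (_ :: map _ _ ++ _); congr map.
apply: eq_in_filter => j; rewrite mem_iota => /andP[lt0j lt_j].
have lt_jn : j < n by rewrite -(prednK n_gt0) -add1n.
by rewrite col_decE ?(ltnW lt_jn) // gtn_eqF // ltn_eqF // lt0j lt_jn andbT.
Qed.

Lemma Delta_split : 0 < n ->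
  perm_eq (Delta K N)
    (((1%R : K), ([::], N)) :: Dprec K N ++ Dsucc K N ++ [:: ((1%R : K), (N, [::]))]).
Proof. by move=> n_gt0; rewrite Delta_cuts // perm_cons catA perm_cat2r perm_sym Dbar_cuts. Qed.

End PackedCoproducts.

Section BlockCoproducts.
Variables (K : nzRingType) (M : mat) (a b : nat).
Hypotheses (packedM : packed M) (le_ab : a <= b) (le_bn : b <= size M).
Hypothesis nrows_ab : nrows M a b = b - a.
Local Notation ell := (lastrow M).

Lemma cuts_block P :
  map (addn a) (cuts (block M a b) 0 (b - a) P) = cuts M a b (fun j => P (j - a)).
Proof.
rewrite /cuts subn0 -[in RHS](addn0 a) iotaDl filter_map addn0.
congr map; apply: eq_filter => i /=; have -> : (a < a + i) = (0 < i) by lia.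
rewrite addKn -ltn_subRL; case: (ltnP i (b - a)) => [lt_i|]; last by rewrite !andbF.
by rewrite /cut !nrows_block ?subn0 ?addn0 ?subnKC ?addKn ?subnDA // ltnW.
Qed.

Lemma cut_pairs_block P :
  cut_pairs (block M a b) 0 (b - a) P = cut_pairs M a b (fun j => P (j - a)).
Proof.
rewrite /cut_pairs -cuts_block -map_comp; apply/eq_in_map => i.
by rewrite mem_cuts => /and4P[_ lt_i _ _] /=; rewrite !block_block ?addn0 ?subnKC // ltnW.
Qed.

Lemma Dprec_block : nonnull (slice a b ell) ->
  Dprec K (block M a b) = basis_sum K (cut_pairs M a b (fun j => ~~ nonnull (slice j b ell))).
Proof.
move=> nz_ell; rewrite Dprec_cuts ?packed_block // size_block nrows_ab lastrow_block //.
rewrite cut_pairs_block /cut_pairs (@eq_cuts _ _ _ _ (fun j => ~~ nonnull (slice j b ell))) //.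
by move=> j lt_aj lt_jb; rewrite slice_slice ?subnKC ?leq_sub2r // ltnW.
Qed.

Lemma Dsucc_block : nonnull (slice a b ell) ->
  Dsucc K (block M a b) = basis_sum K (cut_pairs M a b (fun j => ~~ nonnull (slice a j ell))).
Proof.
move=> nz_ell; rewrite Dsucc_cuts ?packed_block // size_block nrows_ab lastrow_block //.
rewrite cut_pairs_block /cut_pairs (@eq_cuts _ _ _ _ (fun j => ~~ nonnull (slice a j ell))) //.
by move=> j lt_aj lt_jb; rewrite slice_slice ?addn0 ?subnKC ?leq_sub2r // ltnW.
Qed.

Lemma Dbar_block : perm_eq (Dbar K (block M a b)) (basis_sum K (cut_pairs M a b predT)).
Proof.
have := Dbar_cuts K (packed_block packedM le_ab le_bn nrows_ab).
by rewrite size_block nrows_ab cut_pairs_block.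
Qed.

End BlockCoproducts.

Lemma perm_allpairs_transpose (S T : eqType) (s1 : seq T) (t1 : T -> seq S)
    (s2 : seq S) (t2 : S -> seq T) :
  uniq s1 -> uniq s2 -> (forall j, uniq (t1 j)) -> (forall i, uniq (t2 i)) ->
  (forall i j, (j \in s1) && (i \in t1 j) = (i \in s2) && (j \in t2 i)) ->
  perm_eq [seq (i, j) | j <- s1, i <- t1 j] [seq (i, j) | i <- s2, j <- t2 i].
Proof.
move=> uniq_s1 uniq_s2 uniq_t1 uniq_t2 mem12; apply: uniq_perm.
- by apply: allpairs_uniq_dep => // -[j1 i1] [j2 i2] _ _ /= [-> ->].
- by apply: allpairs_uniq_dep => // -[i1 j1] [i2 j2] _ _ /= [-> ->].
move=> [i j]; apply/allpairsPdep/allpairsPdep.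
  case=> j' [i' [j'_s1 i'_t1 [-> ->]]].
  have /andP[i'_s2 j'_t2] : (i' \in s2) && (j' \in t2 i') by rewrite -mem12 j'_s1.
  by exists i', j'.
case=> i' [j' [i'_s2 j'_t2 [-> ->]]].
have /andP[j'_s1 i'_t1] : (j' \in s1) && (i' \in t1 j') by rewrite mem12 i'_s2.
by exists j', i'.
Qed.

Definition tri (M : mat) (i j : nat) : mat * mat * mat :=
  (block M 0 i, block M i j, block M j (size M)).

Lemma cutsP M a b P j : j \in cuts M a b P ->
  [/\ a < j, j < b, nrows M a j = j - a, nrows M j b = b - j & P j].
Proof. by rewrite mem_cuts => /and4P[? ? /andP[/eqP ? /eqP ?] ?]. Qed.

Section Coassociativity.
Variables (K : nzRingType) (M : mat).
Hypothesis packedM : packed M.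
Local Notation n := (size M).
Local Notation ell := (lastrow M).

Lemma mem_cuts_cutl i j P Q :
  (j \in cuts M 0 n P) && (i \in cuts M 0 j Q) =
  [&& 0 < i, i < j, j < n, cut3 M i j, P j & Q i].
Proof.
rewrite !mem_cuts; case: (ltnP i j) => [lt_ij|_]; last by rewrite /= !andbF.
case: (ltnP j n) => [lt_jn|_]; last by rewrite /= !andbF.
case: (posnP i) => [->|lt0i]; first by rewrite /= ?andbF.
by rewrite (ltn_trans lt0i lt_ij) /= andbACA cut_cutl // ltnW.
Qed.

Lemma mem_cuts_cutr i j P Q :
  (i \in cuts M 0 n P) && (j \in cuts M i n Q) =
  [&& 0 < i, i < j, j < n, cut3 M i j, P i & Q j].
Proof.
rewrite !mem_cuts; case: (ltnP i j) => [lt_ij|_]; last by rewrite /= !andbF.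
case: (ltnP j n) => [lt_jn|_]; last by rewrite /= !andbF.
case: (posnP i) => [->|lt0i]; first by rewrite /= ?andbF.
by rewrite (ltn_trans lt_ij lt_jn) /= andbACA cut_cutr // ltnW.
Qed.

Lemma nonnull_lastrow_left j : 0 < n -> j <= n ->
  ~~ nonnull (slice j n ell) -> nonnull (slice 0 j ell).
Proof.
move=> n_gt0 le_jn; have := nonnull_lastrow packedM n_gt0.
by rewrite (nonnull_slice_cat _ (leq0n j) le_jn); case: (nonnull _) (nonnull _) => [] [].
Qed.

Lemma nonnull_lastrow_right j : 0 < n -> j <= n ->
  ~~ nonnull (slice 0 j ell) -> nonnull (slice j n ell).
Proof.
move=> n_gt0 le_jn; have := nonnull_lastrow packedM n_gt0.
by rewrite (nonnull_slice_cat _ (leq0n j) le_jn); case: (nonnull _) (nonnull _) => [] [].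
Qed.

Lemma perm_tri_left P (F : mat -> seq (K * (mat * mat))) (Q : nat -> pred nat) :
  {in cuts M 0 n P, forall j,
     perm_eq (F (block M 0 j)) (basis_sum K (cut_pairs M 0 j (Q j)))} ->
  perm_eq (ext (tens F (@idb K mat)) (basis_sum K (cut_pairs M 0 n P)))
          (basis_sum K [seq tri M i j | j <- cuts M 0 n P, i <- cuts M 0 j (Q j)]).
Proof.
move=> permF; rewrite ext_tens_idbr.
apply: perm_trans (perm_allpairs_dep _ (perm_refl _) permF) _.
by rewrite /basis_sum /cut_pairs !allpairs_mapr map_allpairs.
Qed.

Lemma perm_tri_right P (G : mat -> seq (K * (mat * mat))) (Q : nat -> pred nat) :
  {in cuts M 0 n P, forall i,
     perm_eq (G (block M i n)) (basis_sum K (cut_pairs M i n (Q i)))} ->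
  perm_eq (reassoc (ext (tens (@idb K mat) G) (basis_sum K (cut_pairs M 0 n P))))
          (basis_sum K [seq tri M i j | i <- cuts M 0 n P, j <- cuts M i n (Q i)]).
Proof.
move=> permG; rewrite reassoc_ext_tens_idbl.
apply: perm_trans (perm_allpairs_dep _ (perm_refl _) permG) _.
by rewrite /basis_sum /cut_pairs !allpairs_mapr map_allpairs.
Qed.

Lemma perm_coassoc_cuts P1 Q1 P2 Q2 (F G : mat -> seq (K * (mat * mat))) :
  {in cuts M 0 n P1, forall j,
     perm_eq (F (block M 0 j)) (basis_sum K (cut_pairs M 0 j (Q1 j)))} ->
  {in cuts M 0 n P2, forall i,
     perm_eq (G (block M i n)) (basis_sum K (cut_pairs M i n (Q2 i)))} ->
  (forall i j, (j \in cuts M 0 n P1) && (i \in cuts M 0 j (Q1 j)) =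
               (i \in cuts M 0 n P2) && (j \in cuts M i n (Q2 i))) ->
  perm_eq (ext (tens F (@idb K mat)) (basis_sum K (cut_pairs M 0 n P1)))
          (reassoc (ext (tens (@idb K mat) G) (basis_sum K (cut_pairs M 0 n P2)))).
Proof.
move=> permF permG mem12; apply: perm_trans (perm_tri_left permF) _.
rewrite perm_sym; apply: perm_trans (perm_tri_right permG) _; rewrite perm_sym.
rewrite /basis_sum; apply: perm_map.
rewrite -[X in perm_eq X _](map_allpairs (fun p => tri M p.1 p.2) (fun j i => (i, j))).
rewrite -(map_allpairs (fun p => tri M p.1 p.2) (fun i j => (i, j))).
by apply/perm_map/perm_allpairs_transpose => // *; apply: uniq_cuts.
Qed.

Lemma Dprec_coassoc : 0 < n ->
  perm_eq (ext (tens (Dprec K) (@idb K mat)) (Dprec K M))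
          (reassoc (ext (tens (@idb K mat) (Dbar K)) (Dprec K M))).
Proof.
move=> n_gt0; rewrite Dprec_cuts //.
apply: (perm_coassoc_cuts (Q1 := fun j i => ~~ nonnull (slice i j ell)) (Q2 := fun=> predT)).
- move=> j /cutsP[_ /ltnW le_jn nrows_0j _ ell_j].
  by rewrite Dprec_block ?nonnull_lastrow_left.
- by move=> i /cutsP[_ /ltnW le_in _ nrows_in _]; apply: Dbar_block.
move=> i j; rewrite mem_cuts_cutl mem_cuts_cutr.
case: (ltnP i j) => // lt_ij; case: (ltnP j n) => // lt_jn.
by rewrite andbT (nonnull_slice_cat _ (ltnW lt_ij) (ltnW lt_jn)) negb_or [_ && ~~ _]andbC.
Qed.

Lemma Dprec_Dsucc_coassoc : 0 < n ->
  perm_eq (ext (tens (Dsucc K) (@idb K mat)) (Dprec K M))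
          (reassoc (ext (tens (@idb K mat) (Dprec K)) (Dsucc K M))).
Proof.
move=> n_gt0; rewrite Dprec_cuts // Dsucc_cuts //.
apply: (perm_coassoc_cuts (Q1 := fun _ i => ~~ nonnull (slice 0 i ell))
                          (Q2 := fun _ j => ~~ nonnull (slice j n ell))).
- move=> j /cutsP[_ /ltnW le_jn nrows_0j _ ell_j].
  by rewrite Dsucc_block ?nonnull_lastrow_left.
- move=> i /cutsP[_ /ltnW le_in _ nrows_in ell_i].
  by rewrite Dprec_block ?nonnull_lastrow_right.
move=> i j; rewrite mem_cuts_cutl mem_cuts_cutr.
by rewrite [~~ nonnull (slice j n ell) && _]andbC.
Qed.

Lemma Dsucc_coassoc : 0 < n ->
  perm_eq (ext (tens (Dbar K) (@idb K mat)) (Dsucc K M))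
          (reassoc (ext (tens (@idb K mat) (Dsucc K)) (Dsucc K M))).
Proof.
move=> n_gt0; rewrite Dsucc_cuts //.
apply: (perm_coassoc_cuts (Q1 := fun=> predT) (Q2 := fun i j => ~~ nonnull (slice i j ell))).
- by move=> j /cutsP[_ /ltnW le_jn nrows_0j _ _]; apply: Dbar_block.
- move=> i /cutsP[_ /ltnW le_in _ nrows_in ell_i].
  by rewrite Dsucc_block ?nonnull_lastrow_right.
move=> i j; rewrite mem_cuts_cutl mem_cuts_cutr.
case: (ltnP i j) => // lt_ij.
by rewrite andbT (nonnull_slice_cat _ (leq0n i) (ltnW lt_ij)) negb_or.
Qed.

End Coassociativity.

Theorem proposition2p8 (K : fieldType) (k : nat) :
  (1 <= k)%N ->
  forall x : seq (K * mat), in_PMplus k x ->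
  [/\ feq (ext (@Delta K) x)
          (emptyL x ++ ext (@Dprec K) x ++ ext (@Dsucc K) x ++ emptyR x),
      feq (ext (tens (@Dprec K) (@idb K mat)) (ext (@Dprec K) x))
          (reassoc (ext (tens (@idb K mat) (@Dbar K)) (ext (@Dprec K) x))),
      feq (ext (tens (@Dsucc K) (@idb K mat)) (ext (@Dprec K) x))
          (reassoc (ext (tens (@idb K mat) (@Dprec K)) (ext (@Dsucc K) x)))
    & feq (ext (tens (@Dbar K) (@idb K mat)) (ext (@Dsucc K) x))
          (reassoc (ext (tens (@idb K mat) (@Dsucc K)) (ext (@Dsucc K) x)))].
Proof.
(* The bound k on the entries plays no role. *)
move=> _ x PMx.
have packed_x p : p \in x -> packed p.2 /\ 0 < size p.2.
  by move/allP: PMx => /(_ p) PMp /PMp /andP[/is_packed_packed ? ]; rewrite lt0n size_eq0.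
split; apply: feq_perm; rewrite ?ext_ext ?reassoc_ext; last first.
- by apply: perm_ext => p /packed_x[]; apply: Dsucc_coassoc.
- by apply: perm_ext => p /packed_x[]; apply: Dprec_Dsucc_coassoc.
- by apply: perm_ext => p /packed_x[]; apply: Dprec_coassoc.
have split_Delta : perm_eq (ext (Delta K) x) (ext (fun M => [:: (1%R, ([::], M))] ++
    (Dprec K M ++ (Dsucc K M ++ [:: (1%R, (M, [::]))]))) x).
  by apply: perm_ext => p /packed_x[]; apply: Delta_split.
apply: perm_trans split_Delta _; rewrite /emptyL -ext_unit.
do 3 (apply: perm_trans (perm_ext_cat _ _ _) _; rewrite perm_cat2l).
by rewrite ext_unit.
Qed.
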